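(* Let $\mathcal M$ be a fully closed O*-vector space in $\mathcal L^\dagger(\mathcal D,\mathcal H)$ such that $\mathcal M'_{\rm w}\mathcal D\subset\mathcal D$, and let $E'$ be a projection in $\mathcal M'_{\rm w}$. Let $Z_{E'}$ be the projection onto $\overline{\langle\mathcal M'_{\rm w}E'\mathcal H\rangle}$ (central support of $E'$), and $\mathcal E=\langle\mathcal M'_{\rm w}E'\mathcal D\rangle\oplus(I-Z_{E'})\mathcal D\subset\mathcal D$. For $X\in(\mathcal M_{E'})''_{{\rm w}\sigma}$ define $X_e$ on $\mathcal E$ by $$X_e\Big(\sum_k C_kE'\xi_k+(I-Z_{E'})\eta\Big)=\sum_k C_kXE'\xi_k,\qquad C_k\in\mathcal M'_{\rm w},\ \xi_k,\eta\in\mathcal D,$$ and let $e(\mathcal M_{E'})=\{X_e:X\in(\mathcal M_{E'})''_{{\rm w}\sigma}\}$, an O*-vector space on $\mathcal E$. Assume that $\widehat{\mathcal D}(e(\mathcal M_{E'}))=\bigcap_{X\in(\mathcal M_{E'})''_{{\rm w}\sigma}}D(\overline{X_e})=\mathcal D$ (equivalently, the full closure of $\langle\mathcal M'_{\rm w}E'\mathcal D\rangle$ with respect to $e(\mathcal M_{E'})$ equals $Z_{E'}\mathcal D$). Then $(\mathcal M''_{{\rm w}\sigma})_{E'}=(\mathcal M_{E'})''_{{\rm w}\sigma}$.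
   Context: $\mathcal L^\dagger(\mathcal D,\mathcal H)$: linear operators $X$ with $D(X)=\mathcal D$ (dense subspace of Hilbert space $\mathcal H$), $D(X^* )\supseteq\mathcal D$, involution $X^\dagger=X^*\restriction_{\mathcal D}$. O*-vector space: $\dagger$-invariant subspace. $\widehat{\mathcal D}(\mathcal M)=\bigcap_{X\in\mathcal M}D(\overline X)$; $\mathcal M$ is fully closed if $\widehat{\mathcal D}(\mathcal M)=\mathcal D$. Weak commutant $\mathcal M'_{\rm w}=\{C\in\mathcal B(\mathcal H):\langle CX\xi,\eta\rangle=\langle C\xi,X^\dagger\eta\rangle\ \forall X\in\mathcal M,\ \xi,\eta\in\mathcal D\}$. Unbounded bicommutant $\mathcal M''_{{\rm w}\sigma}=\{X\in\mathcal L^\dagger(\mathcal D,\mathcal H):\langle CX\xi,\eta\rangle=\langle C\xi,X^\dagger\eta\rangle\ \forall C\in\mathcal M'_{\rm w},\ \xi,\eta\in\mathcal D\}$. Reduction by a projection $E'\in\mathcal M'_{\rm w}$ (with $\mathcal M'_{\rm w}\mathcal D\subset\mathcal D$): $\mathcal M_{E'}=\{X\restriction_{E'\mathcal D}:X\in\mathcal M\}$, an O*-vector space in $\mathcal L^\dagger(E'\mathcal D,E'\mathcal H)$, and similarly $(\mathcal M''_{{\rm w}\sigma})_{E'}=\{X\restriction_{E'\mathcal D}:X\in\mathcal M''_{{\rm w}\sigma}\}$; commutants of $\mathcal M_{E'}$ are taken in $E'\mathcal H$ with respect to the domain $E'\mathcal D$. $\langle\cdot\rangle$ denotes linear span. 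*)

From mathcomp Require Import all_boot all_order all_algebra complex all_reals.
Set Implicit Arguments. Unset Strict Implicit. Unset Printing Implicit Defensive.
Import Order.TTheory GRing.Theory Num.Theory.
Local Open Scope ring_scope.

Section Hilbert.
Variables (C : numClosedFieldType) (H : lmodType C) (ip : H -> H -> C).

Definition hconv (u : nat -> H) (x : H) : Prop :=
  forall eps : C, 0 < eps -> exists N : nat, forall n : nat, (N <= n)%N ->
    ip (u n - x) (u n - x) < eps.

Definition hcauchy (u : nat -> H) : Prop :=
  forall eps : C, 0 < eps -> exists N : nat, forall m n : nat, (N <= m)%N -> (N <= n)%N ->
    ip (u m - u n) (u m - u n) < eps.

Definition is_hilbert : Prop :=
  [/\ (forall (a : C) (x y z : H), ip (a *: x + y) z = a * ip x z + ip y z),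
      (forall x y : H, ip x y = (ip y x)^*),
      (forall x : H, 0 <= ip x x),
      (forall x : H, ip x x = 0 -> x = 0)
    & (forall u : nat -> H, hcauchy u -> exists x, hconv u x)].

Definition subspace (D : H -> Prop) : Prop :=
  D 0 /\ forall (a : C) (x y : H), D x -> D y -> D (a *: x + y).

Definition dense_in (K D : H -> Prop) : Prop :=
  forall x, K x -> exists u : nat -> H, (forall n, D (u n)) /\ hconv u x.

Definition linear_on (D : H -> Prop) (X : H -> H) : Prop :=
  forall (a : C) (x y : H), D x -> D y -> X (a *: x + y) = a *: X x + X y.

(* Y (restricted to Dm) is X^dagger = X^* restricted to Dm, the ambient Hilbert space being K *)
Definition is_dag (K Dm : H -> Prop) (X Y : H -> H) : Prop :=
  (forall eta, Dm eta -> K (Y eta)) /\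
  forall xi eta, Dm xi -> Dm eta -> ip (X xi) eta = ip xi (Y eta).

(* X in L^dagger(Dm, K) (operators are functions H -> H; only values on Dm matter) *)
Definition Ldag (K Dm : H -> Prop) (X : H -> H) : Prop :=
  [/\ linear_on Dm X, (forall x, Dm x -> K (X x)) & exists Y, is_dag K Dm X Y].

Definition bounded_on (K : H -> Prop) (T : H -> H) : Prop :=
  [/\ linear_on K T, (forall x, K x -> K (T x)) &
      exists b : C, forall x, K x -> ip (T x) (T x) <= b * ip x x].

Definition agree_on (Dm : H -> Prop) (X Y : H -> H) : Prop :=
  forall x, Dm x -> X x = Y x.

(* O*-vector space in L^dagger(D, H) (elements identified up to agreement on D) *)
Definition Ovs (D : H -> Prop) (M : (H -> H) -> Prop) : Prop :=
  [/\ (forall X, M X -> Ldag (fun _ => True) D X),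
      (exists Z, M Z /\ agree_on D Z (fun _ => 0)),
      (forall (a : C) X Y, M X -> M Y -> exists Z, M Z /\ agree_on D Z (fun x => a *: X x + Y x))
    & (forall X, M X -> exists Y, M Y /\ is_dag (fun _ => True) D X Y)].

(* weak commutant M'_w, computed in the ambient Hilbert space K w.r.t. domain Dm *)
Definition wcomm (K Dm : H -> Prop) (M : (H -> H) -> Prop) (T : H -> H) : Prop :=
  bounded_on K T /\
  forall X Y, M X -> is_dag K Dm X Y ->
    forall xi eta, Dm xi -> Dm eta -> ip (T (X xi)) eta = ip (T xi) (Y eta).

Definition bicomm (K Dm : H -> Prop) (M : (H -> H) -> Prop) (X : H -> H) : Prop :=
  Ldag K Dm X /\
  forall T, wcomm K Dm M T -> forall Y, is_dag K Dm X Y ->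
    forall xi eta, Dm xi -> Dm eta -> ip (T (X xi)) eta = ip (T xi) (Y eta).

Definition closdom_rel (G : H -> H -> Prop) (xi : H) : Prop :=
  exists u v : nat -> H, (forall n, G (u n) (v n)) /\ hconv u xi /\ exists z, hconv v z.

Definition closdom (D : H -> Prop) (X : H -> H) (xi : H) : Prop :=
  closdom_rel (fun x y => D x /\ y = X x) xi.

Definition fully_closed (D : H -> Prop) (M : (H -> H) -> Prop) : Prop :=
  forall xi, D xi <-> (forall X, M X -> closdom D X xi).

Definition projection (P : H -> H) : Prop :=
  [/\ bounded_on (fun _ => True) P, (forall x, P (P x) = P x)
    & (forall x y, ip (P x) y = ip x (P y))].

Definition img (P : H -> H) (S : H -> Prop) : H -> Prop :=
  fun x => exists y, S y /\ x = P y.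

End Hilbert.

From mathcomp Require Import all_boot all_order all_algebra complex all_reals.
From mathcomp Require Import ring lra boolp classical_sets.
Import Order.TTheory GRing.Theory Num.Theory.
Set Implicit Arguments. Unset Strict Implicit.
Local Open Scope ring_scope.

(* If [X] is in [M''_{w sigma}], it commutes with [E'] (an element of [M'_w]), so it maps
   [E'D] into itself; every [T] in the weak commutant of [M_{E'}] extends to [T E'] in
   [M'_w], hence the restriction of [X] to [E'D] lies in [(M_{E'})''_{w sigma}].
   Conversely, let [Y] be in [(M_{E'})''_{w sigma}]. The operators [Y_e] and [(Y^dagger)_e]
   are formally adjoint on [E]: the cross terms are [<C'^* C Y a, b>] where [E' C'^* C E']
   lies in the weak commutant of [M_{E'}], and the [(I - Z) D] components are orthogonal
   to the range of [Z]. As [E] is dense, the closure of [Y_e] is the adjoint of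
   [(Y^dagger)_e]; by hypothesis it is defined on [D], and its restriction [X] to [D] is
   the wanted extension: [M'_w] maps the graph of [(Y^dagger)_e] into itself ([Z] commutes
   with [M'_w]), so [X] commutes with [M'_w]. Adjoints of elements of [M'_w] come from the
   Riesz representation theorem, proved by the nearest-point argument. *)

Section Scalars.
Variable R : realType.
Notation Re := (@complex.Re R).
Notation Im := (@complex.Im R).
Notation "x %:C" := (real_complex R x).

Definition sqrmod (z : R[i]) : R := Re z ^+ 2 + Im z ^+ 2.

Lemma sqrmod_ge0 z : 0 <= sqrmod z.
Proof. rewrite /sqrmod; nra. Qed.

Lemma sqrmod_eq0 z : sqrmod z = 0 -> z = 0.
Proof.
case: z => a b; rewrite /sqrmod /= => h.
have -> : a = 0 by nra.
by have -> : b = 0 by nra.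
Qed.

Lemma sqrmodM a b : sqrmod (a * b) = sqrmod a * sqrmod b.
Proof. case: a => a1 a2; case: b => b1 b2; rewrite /sqrmod /=; ring. Qed.

Lemma sqrmodD_le a b : sqrmod (a + b) <= 2 * sqrmod a + 2 * sqrmod b.
Proof.
case: a => a1 a2; case: b => b1 b2; rewrite /sqrmod /=.
have := sqr_ge0 (a1 - b1); have := sqr_ge0 (a2 - b2); nra.
Qed.

Lemma sqrmodR (r : R) : sqrmod r%:C = r ^+ 2.
Proof. rewrite /sqrmod /=; ring. Qed.

Lemma sqrmodN1 : sqrmod (-1) = 1.
Proof. rewrite /sqrmod /=; ring. Qed.

Lemma Re_sqr_le_sqrmod z : Re z ^+ 2 <= sqrmod z.
Proof. rewrite /sqrmod; nra. Qed.

Lemma ge0c_real (z : R[i]) : 0 <= z -> z = (Re z)%:C /\ 0 <= Re z.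
Proof. by case: z => a b; rewrite lecE => /andP[/eqP /= -> h]. Qed.

Lemma gt0c_real (z : R[i]) : 0 < z -> z = (Re z)%:C /\ 0 < Re z.
Proof. by case: z => a b; rewrite ltcE => /andP[/eqP /= -> h]. Qed.

Lemma conjcR (r : R) : (r%:C)^* = r%:C.
Proof. by apply/eqP; rewrite eq_complex /= oppr0 !eqxx. Qed.

Lemma conjc_mulR (z : R[i]) (r : R) : (z^* * r%:C)^* = z * r%:C.
Proof. case: z => a b; apply/eqP; rewrite eq_complex /=; apply/andP; split; apply/eqP; ring. Qed.

Lemma eq0_of_lt_all (r : R) : 0 <= r -> (forall e, 0 < e -> r < e) -> r = 0.
Proof.
move=> r0 small; apply/eqP; rewrite eq_le r0 andbT leNgt; apply/negP => /small.
by rewrite ltxx.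
Qed.

Lemma inv_succ_small (e : R) : 0 < e -> exists N, forall n, (N <= n)%N -> n.+1%:R^-1 < e.
Proof.
move=> e0; exists (Num.truncn e^-1) => n le_Nn.
have lt_e : e^-1 < (Num.truncn e^-1).+1%:R := truncnS_gt _.
have le_n : (Num.truncn e^-1).+1%:R <= n.+1%:R :> R by rewrite ler_nat.
by rewrite -[e]invrK ltf_pV2 ?posrE ?invr_gt0 //; apply: lt_le_trans le_n.
Qed.

End Scalars.

Section InnerProduct.
Variables (R : realType) (H : lmodType R[i]) (ip : H -> H -> R[i]).
Hypothesis hH : is_hilbert ip.
Notation Re := (@complex.Re R).
Notation "x %:C" := (real_complex R x).

Lemma ipZDl (a : R[i]) x y z : ip (a *: x + y) z = a * ip x z + ip y z.
Proof. by case: hH. Qed.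
Lemma ip_conj x y : ip x y = (ip y x)^*.
Proof. by case: hH. Qed.
Lemma ipxx_ge0 x : 0 <= ip x x.
Proof. by case: hH. Qed.
Lemma ipxx_eq0 x : ip x x = 0 -> x = 0.
Proof. by case: hH => _ _ _ h _; apply: h. Qed.

Lemma ip0l z : ip 0 z = 0.
Proof. by have := ipZDl (-1) z z z; rewrite scaleN1r addNr mulN1r addNr. Qed.
Lemma ipDl x y z : ip (x + y) z = ip x z + ip y z.
Proof. by rewrite -[x]scale1r ipZDl mul1r scale1r. Qed.
Lemma ipZl a x z : ip (a *: x) z = a * ip x z.
Proof. by rewrite -[a *: x]addr0 ipZDl ip0l addr0. Qed.
Lemma ipNl x z : ip (- x) z = - ip x z.
Proof. by rewrite -scaleN1r ipZl mulN1r. Qed.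
Lemma ipBl x y z : ip (x - y) z = ip x z - ip y z.
Proof. by rewrite ipDl ipNl. Qed.
Lemma ip0r z : ip z 0 = 0.
Proof. by rewrite ip_conj ip0l conjC0. Qed.
Lemma ipDr x y z : ip z (x + y) = ip z x + ip z y.
Proof. by rewrite !(ip_conj z) ipDl rmorphD. Qed.
Lemma ipZr a x z : ip z (a *: x) = a^* * ip z x.
Proof. by rewrite !(ip_conj z) ipZl rmorphM. Qed.
Lemma ipBr x y z : ip z (x - y) = ip z x - ip z y.
Proof. by rewrite !(ip_conj z) ipBl rmorphB. Qed.

Lemma ip_suml n (f : 'I_n -> H) z : ip (\sum_(j < n) f j) z = \sum_(j < n) ip (f j) z.
Proof. by elim/big_ind2: _ => [|? ? ? ? <- <-|//]; rewrite ?ip0l ?ipDl. Qed.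
Lemma ip_sumr n (f : 'I_n -> H) z : ip z (\sum_(j < n) f j) = \sum_(j < n) ip z (f j).
Proof. by elim/big_ind2: _ => [|? ? ? ? <- <-|//]; rewrite ?ip0r ?ipDr. Qed.

Lemma ip_injl z1 z2 : (forall x, ip z1 x = ip z2 x) -> z1 = z2.
Proof. by move=> h; apply: subr0_eq; apply: ipxx_eq0; rewrite ipBl h subrr. Qed.
Lemma ip_injr z1 z2 : (forall x, ip x z1 = ip x z2) -> z1 = z2.
Proof. by move=> h; apply: subr0_eq; apply: ipxx_eq0; rewrite ipBr h subrr. Qed.

(* [nrm2 x] is the squared norm, taken real-valued so that [lra]/[nra] apply. *)
Definition nrm2 x := Re (ip x x).

Lemma ipxxE x : ip x x = (nrm2 x)%:C.
Proof. by have [] := ge0c_real (ipxx_ge0 x). Qed.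
Lemma nrm2_ge0 x : 0 <= nrm2 x.
Proof. by have [] := ge0c_real (ipxx_ge0 x). Qed.
Lemma nrm2_eq0 x : nrm2 x = 0 -> x = 0.
Proof. by move=> h; apply: ipxx_eq0; rewrite ipxxE h. Qed.
Lemma nrm20 : nrm2 0 = 0.
Proof. by rewrite /nrm2 ip0l. Qed.

Lemma nrm2_subZ x y a :
  nrm2 (x - a *: y) = nrm2 x - 2 * Re (a^* * ip x y) + sqrmod a * nrm2 y.
Proof.
rewrite /nrm2 ipBl !ipBr !ipZl !ipZr [ip y x]ip_conj.
move: (ip x x) (ip x y) (ip y y) => [p1 p2] [q1 q2] [r1 r2].
case: a => a1 a2; rewrite /sqrmod /=; ring.
Qed.

Lemma nrm2D x y : nrm2 (x + y) = nrm2 x + 2 * Re (ip x y) + nrm2 y.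
Proof.
have -> : x + y = x - (-1) *: y by rewrite scaleN1r opprK.
rewrite nrm2_subZ sqrmodN1.
by move: (ip x y) => [p1 p2] /=; ring.
Qed.

Lemma nrm2Z a x : nrm2 (a *: x) = sqrmod a * nrm2 x.
Proof.
rewrite /nrm2 ipZl ipZr; move: (ip x x) => [p1 p2].
case: a => a1 a2; rewrite /sqrmod /=; ring.
Qed.

Lemma nrm2N x : nrm2 (- x) = nrm2 x.
Proof. by rewrite -scaleN1r nrm2Z sqrmodN1 mul1r. Qed.

Lemma nrm2_subC x y : nrm2 (x - y) = nrm2 (y - x).
Proof. by rewrite -nrm2N opprB. Qed.

Lemma parallelogram a b : nrm2 (a + b) + nrm2 (a - b) = 2 * nrm2 a + 2 * nrm2 b.
Proof.
have -> : a - b = a - 1 *: b by rewrite scale1r.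
rewrite nrm2D nrm2_subZ.
have -> : sqrmod (1 : R[i]) = 1 by rewrite /sqrmod /=; ring.
by move: (ip a b) => [p1 p2] /=; ring.
Qed.

Lemma nrm2_sub_proj x y : 0 < nrm2 y ->
  nrm2 (x - (ip x y * (nrm2 y)^-1%:C) *: y) = nrm2 x - sqrmod (ip x y) / nrm2 y.
Proof.
move=> y0; rewrite nrm2_subZ sqrmodM sqrmodR.
have -> : Re ((ip x y * (nrm2 y)^-1%:C)^* * ip x y) = (nrm2 y)^-1 * sqrmod (ip x y).
  by move: (ip x y) => [p1 p2]; rewrite /sqrmod /=; ring.
have yV : (nrm2 y)^-1 * nrm2 y = 1 by rewrite mulVf // gt_eqF.
move: (nrm2 y)^-1 yV => t yV.
have -> : sqrmod (ip x y) * t ^+ 2 * nrm2 y = sqrmod (ip x y) * t * (t * nrm2 y) by ring.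
by rewrite yV; ring.
Qed.

Lemma cauchy_schwarz x y : sqrmod (ip x y) <= nrm2 x * nrm2 y.
Proof.
have [y0|] := eqVneq (nrm2 y) 0.
  by rewrite (nrm2_eq0 y0) ip0r nrm20 mulr0 -[0 : R[i]]/(0%:C) sqrmodR expr0n.
rewrite neq_lt ltNge nrm2_ge0 /= => y_gt0.
have := nrm2_ge0 (x - (ip x y * (nrm2 y)^-1%:C) *: y).
rewrite nrm2_sub_proj // subr_ge0 ler_pdivrMr //.
Qed.

End InnerProduct.

Section Convergence.
Variables (R : realType) (H : lmodType R[i]) (ip : H -> H -> R[i]).
Hypothesis hH : is_hilbert ip.
Notation Re := (@complex.Re R).
Notation "x %:C" := (real_complex R x).
Notation nrm2 := (nrm2 ip).

Definition cvgH (u : nat -> H) x := forall e : R, 0 < e ->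
  exists N, forall n, (N <= n)%N -> nrm2 (u n - x) < e.

Lemma hconvP u x : hconv ip u x <-> cvgH u x.
Proof.
split=> cvg_u e e0.
  have e0' : 0 < e%:C by rewrite ltcR.
  have [N uN] := cvg_u _ e0'.
  by exists N => n /uN; rewrite (ipxxE hH) ltcR.
have [-> e0'] := gt0c_real e0; have [N uN] := cvg_u _ e0'.
by exists N => n /uN; rewrite (ipxxE hH) ltcE /= eqxx.
Qed.

Lemma cvgH_complete u : (forall e : R, 0 < e -> exists N, forall m n,
  (N <= m)%N -> (N <= n)%N -> nrm2 (u m - u n) < e) -> exists x, cvgH u x.
Proof.
move=> cauchy_u; suff [x /hconvP] : exists x, hconv ip u x by exists x.
case: hH => _ _ _ _; apply => e e0.
have [-> e0'] := gt0c_real e0; have [N uN] := cauchy_u _ e0'.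
by exists N => m n /uN uNm /uNm; rewrite (ipxxE hH) ltcE /= eqxx.
Qed.

Lemma cvgH_cst x : cvgH (fun _ => x) x.
Proof. by move=> e e0; exists 0%N => n _; rewrite subrr (nrm20 hH). Qed.

Lemma cvgH_bounded (T : H -> H) (b : R) u x :
  linear_on (fun _ => True) T -> (forall z, nrm2 (T z) <= b * nrm2 z) ->
  cvgH u x -> cvgH (fun n => T (u n)) (T x).
Proof.
move=> T_lin T_bnd cvg_u e e0.
have b1 : 0 < `|b| + 1 by have := normr_ge0 b; lra.
have [N uN] := cvg_u _ (divr_gt0 e0 b1); exists N => n /uN.
have -> : T (u n) - T x = T (u n - x).
  by have := T_lin (-1) x (u n) I I; rewrite !scaleN1r !(addrC (- _)) => ->.
rewrite ltr_pdivlMr // => lt_un; apply: le_lt_trans (T_bnd _) _.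
have := nrm2_ge0 hH (u n - x); have := ler_norm b.
move: (nrm2 _) lt_un => U lt_un le_b U0.
have : b * U <= `|b| * U by apply: ler_wpM2r.
nra.
Qed.

Lemma ip_lim u v x z w y : cvgH u x -> cvgH v z ->
  (forall n, ip (v n) w = ip (u n) y) -> ip z w = ip x y.
Proof.
move=> cvg_u cvg_v uv; apply: subr0_eq; apply: sqrmod_eq0.
apply: eq0_of_lt_all; first exact: sqrmod_ge0.
move=> e e0.
have w1 : 0 < 4 * (nrm2 w + 1) by have := nrm2_ge0 hH w; lra.
have y1 : 0 < 4 * (nrm2 y + 1) by have := nrm2_ge0 hH y; lra.
have [N1 vN] := cvg_v _ (divr_gt0 e0 w1).
have [N2 uN] := cvg_u _ (divr_gt0 e0 y1).
pose n := maxn N1 N2.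
have -> : ip z w - ip x y = ip (z - v n) w + ip (u n - x) y.
  by rewrite !(ipBl hH) uv addrA addrNK.
apply: le_lt_trans (sqrmodD_le _ _) _.
have := cauchy_schwarz hH (z - v n) w; have := cauchy_schwarz hH (u n - x) y.
rewrite (nrm2_subC hH z).
have := vN n (leq_maxl _ _); have := uN n (leq_maxr _ _); rewrite !ltr_pdivlMr //.
have := nrm2_ge0 hH w; have := nrm2_ge0 hH y.
have := nrm2_ge0 hH (v n - z); have := nrm2_ge0 hH (u n - x).
move: (sqrmod _) (sqrmod _) (nrm2 (v n - z)) (nrm2 (u n - x)) (nrm2 w) (nrm2 y).
move=> A B V U W Y; nra.
Qed.

Lemma ip_lim0r u x w : cvgH u x -> (forall n, ip w (u n) = 0) -> ip w x = 0.
Proof.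
move=> cvg_u uw0.
have uw0' n : ip (u n) w = ip (u n) 0 by rewrite (ip0r hH) (ip_conj hH) uw0 conjC0.
by rewrite (ip_conj hH) (ip_lim cvg_u cvg_u uw0') (ip0r hH) conjC0.
Qed.

(* AM-GM with weight [t]: [2 Re <p, q> <= t |p|^2 + |q|^2 / t]. *)
Lemma nrm2D_le p q (t : R) : 0 < t ->
  nrm2 (p + q) <= (1 + t) * nrm2 p + (1 + t^-1) * nrm2 q.
Proof.
move=> t0; rewrite (nrm2D hH).
have := Re_sqr_le_sqrmod (ip p q); have := cauchy_schwarz hH p q.
have := nrm2_ge0 hH p; have := nrm2_ge0 hH q.
have tV : t * t^-1 = 1 by rewrite mulfV // gt_eqF.
have tV0 : 0 < t^-1 by rewrite invr_gt0.
move: (Re _) (sqrmod _) (nrm2 p) (nrm2 q) (t^-1) tV tV0 => r s A B ti tV tV0 B0 A0 sAB rs.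
have tA0 : 0 <= t * A by apply: mulr_ge0; lra.
have tB0 : 0 <= ti * B by apply: mulr_ge0; lra.
have AB : A * B = (t * A) * (ti * B).
  by rewrite mulrACA tV mul1r.
have : (2 * r) ^+ 2 <= (t * A + ti * B) ^+ 2.
  have := sqr_ge0 (t * A - ti * B); rewrite AB in sAB; nra.
have [r0|r0] := lerP (2 * r) 0; first by move=> _; nra.
rewrite ler_sqr ?nnegrE; nra.
Qed.

Lemma nrm2_cvg_le u x (c : R) : 0 <= c -> cvgH u x ->
  (forall e, 0 < e -> exists N, forall n, (N <= n)%N -> nrm2 (u n) < c + e) ->
  nrm2 x <= c.
Proof.
move=> c0 cvg_u u_le; rewrite leNgt; apply/negP => lt_cx.
pose e := nrm2 x - c; have e0 : 0 < e by rewrite /e; lra.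
pose t := e / 4 / (c + 1).
have t0 : 0 < t by apply: divr_gt0; [apply: divr_gt0 => //; lra | lra].
have tc : t * c < e / 4.
  have : t * (c + 1) = e / 4 by rewrite /t divfK //; apply: lt0r_neq0; lra.
  lra.
have tV0 : 0 < t^-1 by rewrite invr_gt0.
have e1 : 0 < e / (4 * (1 + t)) by apply: divr_gt0 => //; lra.
have e2 : 0 < e / (2 * (1 + t^-1)) by apply: divr_gt0 => //; lra.
have [N1 uN1] := u_le _ e1; have [N2 uN2] := cvg_u _ e2.
pose n := maxn N1 N2.
have := nrm2D_le (u n) (x - u n) t0; rewrite addrC subrK.
have := uN1 n (leq_maxl _ _); have := uN2 n (leq_maxr _ _).
rewrite (nrm2_subC hH) !ltr_pdivlMr; try lra.
have := nrm2_ge0 hH (u n); have := nrm2_ge0 hH (x - u n).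
rewrite -/e; move: (nrm2 (u n)) (nrm2 (x - u n)) (t^-1) tV0 => A B ti ti0 B0 A0 hB hA.
have k : (1 + t) * (e / (4 * (1 + t))) = e / 4.
  by rewrite mulrC invfM mulrA divfK // gt_eqF //; lra.
have : (1 + t) * A <= (1 + t) * c + e / 4.
  by rewrite -k -mulrDr; apply: ler_wpM2l; lra.
rewrite /e in tc hB *; lra.
Qed.

End Convergence.

Section NearestPoint.
Variables (R : realType) (H : lmodType R[i]) (ip : H -> H -> R[i]).
Hypothesis hH : is_hilbert ip.
Notation nrm2 := (nrm2 ip).
Notation cvgH := (cvgH ip).
Notation "x %:C" := (real_complex R x).

Variable K : H -> Prop.
Hypothesis K_lin : forall a p q, K p -> K q -> K (a *: p + q).
Hypothesis K0 : K 0.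
Hypothesis K_closed : forall u x, (forall n, K (u n)) -> cvgH u x -> K x.

(* Parallelogram law applied to [x0 - k q] and [x0 - k p], whose midpoint lies at distance >= m. *)
Lemma minimizing_seq_cauchy x0 (m : R) (k : nat -> H) :
  (forall p, K p -> m <= nrm2 (x0 - p)) ->
  (forall n, K (k n)) -> (forall n, nrm2 (x0 - k n) < m + n.+1%:R^-1) ->
  forall p q, nrm2 (k p - k q) <= 2 * p.+1%:R^-1 + 2 * q.+1%:R^-1.
Proof.
move=> m_le kK kn p q.
have := parallelogram hH (x0 - k q) (x0 - k p).
have -> : x0 - k q - (x0 - k p) = k p - k q by rewrite opprB addrC addrA addrNK.
have -> : x0 - k q + (x0 - k p) = 2%:R *: (x0 - (2%:R^-1 : R[i]) *: (k q + k p)).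
  rewrite scalerBr (scalerA 2%:R (2%:R^-1)) mulfV ?pnatr_eq0 //.
  by rewrite scale1r scaler_nat mulr2n opprD addrACA.
rewrite (nrm2Z hH).
have -> : sqrmod (2%:R : R[i]) = 4 by rewrite /sqrmod /=; ring.
have := m_le _ (K_lin (2%:R^-1) (K_lin 1 (kK q) (kK p)) K0).
rewrite scale1r addr0.
have := kn p; have := kn q.
move: (p.+1%:R^-1 : R) (q.+1%:R^-1 : R) => a b; lra.
Qed.

Lemma nearest_point x0 : exists2 k0, K k0 & forall p, K p -> nrm2 (x0 - k0) <= nrm2 (x0 - p).
Proof.
pose S : set R := fun r => exists2 p, K p & r = nrm2 (x0 - p).
have S_inf : has_inf S.
  by split; [exists (nrm2 (x0 - 0)), 0 | exists 0 => _ [p _ ->]; apply: nrm2_ge0].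
pose m := inf S.
have m0 : 0 <= m.
  apply: lb_le_inf; first by exists (nrm2 (x0 - 0)), 0.
  by move=> _ [p _ ->]; apply: (nrm2_ge0 hH).
have m_le p : K p -> m <= nrm2 (x0 - p) by move=> Kp; apply: ge_inf; [case: S_inf | exists p].
have k_ex n : exists k, K k /\ nrm2 (x0 - k) < m + n.+1%:R^-1.
  have n0 : 0 < n.+1%:R^-1 :> R by rewrite invr_gt0.
  by have [_ [p Kp ->] lt_p] := inf_adherent n0 S_inf; exists p.
pose k n := sval (cid (k_ex n)).
have kK n : K (k n) by rewrite /k; case: cid => ? [].
have kn n : nrm2 (x0 - k n) < m + n.+1%:R^-1 by rewrite /k; case: cid => ? [].
have [k0 cvg_k] : exists k0, cvgH k k0.
  apply: (cvgH_complete hH) => e e0.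
  have e4 : 0 < e / 4 by apply: divr_gt0 => //; lra.
  have [N kN] := inv_succ_small e4.
  exists N => p q /kN lt_p /kN lt_q.
  apply: le_lt_trans (minimizing_seq_cauchy m_le kK kn p q) _.
  by move: (p.+1%:R^-1 : R) (q.+1%:R^-1 : R) lt_p lt_q => a b; lra.
exists k0 => [|p Kp]; first exact: K_closed kK cvg_k.
apply: le_trans (m_le _ Kp); apply: (nrm2_cvg_le hH m0 (u := fun n => x0 - k n)).
  move=> e e0; have [N kN] := cvg_k e e0; exists N => n /kN lt_n /=.
  by rewrite opprB addrC addrA addrNK (nrm2_subC hH).
move=> e e0; have [N lt_N] := inv_succ_small e0.
exists N => n /lt_N; have := kn n.
by move: (n.+1%:R^-1 : R) => a; lra.
Qed.

(* Perturbing the nearest point by [a *: p], with [a] chosen as in Cauchy-Schwarz. *)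
Lemma nearest_point_orthogonal w :
  (forall p, K p -> nrm2 w <= nrm2 (w - p)) -> forall p, K p -> ip w p = 0.
Proof.
move=> w_min p Kp; have [->|p_neq0] := eqVneq p 0; first exact: ip0r.
have p0 : 0 < nrm2 p.
  by rewrite lt_def (nrm2_ge0 hH) andbT; apply: contra_neq p_neq0 => /(nrm2_eq0 hH).
have := w_min _ (K_lin (ip w p * (nrm2 p)^-1%:C) Kp K0).
rewrite addr0 (nrm2_sub_proj hH) // => le_w; apply: sqrmod_eq0; apply/eqP.
have : sqrmod (ip w p) / nrm2 p <= 0 by lra.
by rewrite pmulr_lle0 ?invr_gt0 // eq_le sqrmod_ge0 andbT.
Qed.

End NearestPoint.

Section Riesz.
Variables (R : realType) (H : lmodType R[i]) (ip : H -> H -> R[i]).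
Hypothesis hH : is_hilbert ip.
Notation nrm2 := (nrm2 ip).
Notation cvgH := (cvgH ip).
Notation "x %:C" := (real_complex R x).

Variables (f : H -> R[i]) (c : R).
Hypothesis f_lin : forall a x y, f (a *: x + y) = a * f x + f y.
Hypothesis f_bnd : forall x, sqrmod (f x) <= c * nrm2 x.

Lemma functional0 : f 0 = 0.
Proof. by have := f_lin (-1) 0 0; rewrite scaleN1r oppr0 addr0 mulN1r addNr. Qed.

Lemma functionalB x y : f (x - y) = f x - f y.
Proof. by rewrite addrC -scaleN1r f_lin mulN1r addrC. Qed.

Lemma functional_cvg0 u x : (forall n, f (u n) = 0) -> cvgH u x -> f x = 0.
Proof.
move=> fu0 cvg_u; apply: sqrmod_eq0; apply: eq0_of_lt_all; first exact: sqrmod_ge0.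
move=> e e0; have c1 : 0 < `|c| + 1 by have := normr_ge0 c; lra.
have [N uN] := cvg_u _ (divr_gt0 e0 c1).
have := uN N (leqnn N); rewrite ltr_pdivlMr // (nrm2_subC hH) => lt_N.
have -> : f x = f (x - u N) by rewrite functionalB fu0 subr0.
apply: le_lt_trans (f_bnd _) _.
have := nrm2_ge0 hH (x - u N); have := ler_norm c.
move: (nrm2 _) lt_N => U lt_N le_c U0.
have : c * U <= `|c| * U by apply: ler_wpM2r.
nra.
Qed.

Lemma riesz_representation : exists z, forall x, f x = ip x z.
Proof.
have [f0|[x1 fx1]] : (forall x, f x = 0) \/ exists x, f x <> 0.
  case: (pselect (exists x, f x <> 0)) => [|nf]; [by right | left => x].
  by apply: contrapT => fx; apply: nf; exists x.
  by exists 0 => x; rewrite f0 (ip0r hH).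
pose K x := f x = 0.
have K_lin a p q : K p -> K q -> K (a *: p + q) by rewrite /K f_lin => -> ->; rewrite mulr0 addr0.
have K_closed u x : (forall n, K (u n)) -> cvgH u x -> K x by exact: functional_cvg0.
pose x0 := (f x1)^-1 *: x1.
have [k0 Kk0 k0_min] := nearest_point hH K_lin functional0 K_closed x0.
pose w := x0 - k0.
have fw : f w = 1.
  by rewrite functionalB Kk0 subr0 -[x0]addr0 f_lin functional0 addr0 mulVf //; apply/eqP.
have w_orth p : K p -> ip w p = 0.
  apply: (nearest_point_orthogonal hH K_lin functional0) => q Kq.
  have := k0_min _ (K_lin 1 _ _ Kq Kk0).
  by rewrite scale1r opprD addrA addrAC.
have w0 : 0 < nrm2 w.
  rewrite lt_def (nrm2_ge0 hH) andbT; apply/eqP => /(nrm2_eq0 hH) w0.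
  by move: fw; rewrite w0 functional0 => /eqP; rewrite eq_sym oner_eq0.
exists ((nrm2 w)^-1%:C *: w) => x.
have fZ a y : f (a *: y) = a * f y by rewrite -[a *: y]addr0 f_lin functional0 addr0.
have Kx : K (x - f x *: w) by rewrite /K functionalB fZ fw mulr1 subrr.
have /eqP := w_orth _ Kx; rewrite (ipBr hH) (ipZr hH) (ipxxE hH) subr_eq0 => /eqP wx.
rewrite (ipZr hH) conjcR (ip_conj hH) wx conjc_mulR mulrCA -rmorphM.
by rewrite mulVf ?gt_eqF // rmorph1 mulr1.
Qed.

End Riesz.

Section BoundedOperators.
Variables (R : realType) (H : lmodType R[i]) (ip : H -> H -> R[i]).
Hypothesis hH : is_hilbert ip.
Notation Re := (@complex.Re R).
Notation "x %:C" := (real_complex R x).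
Notation nrm2 := (nrm2 ip).
Notation TT := (fun _ : H => True).

Lemma lin_on0 (K : H -> Prop) (T : H -> H) : K 0 -> linear_on K T -> T 0 = 0.
Proof.
move=> K0 T_lin; have := T_lin (-1) 0 0 K0 K0.
by rewrite scaleN1r oppr0 addr0 scaleN1r addNr.
Qed.

Section LinearOnT.
Variables (T : H -> H) (T_lin : linear_on TT T).

Lemma lin_onZD a x y : T (a *: x + y) = a *: T x + T y.
Proof. exact: T_lin. Qed.
Lemma lin_onD x y : T (x + y) = T x + T y.
Proof. by have := lin_onZD 1 x y; rewrite !scale1r. Qed.
Lemma lin_onZ a x : T (a *: x) = a *: T x.
Proof. by rewrite -[a *: x]addr0 lin_onZD (lin_on0 _ T_lin) ?addr0. Qed.
Lemma lin_onB x y : T (x - y) = T x - T y.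
Proof. by rewrite lin_onD -scaleN1r lin_onZ scaleN1r. Qed.
Lemma lin_on_sum n (f : 'I_n -> H) : T (\sum_(j < n) f j) = \sum_(j < n) T (f j).
Proof. by elim/big_ind2: _ => [|? ? ? ? <- <-|//]; rewrite ?(lin_on0 _ T_lin) ?lin_onD. Qed.

End LinearOnT.

Lemma bounded_on_nrm2 K T : bounded_on ip K T ->
  exists2 b : R, 0 <= b & forall x, K x -> nrm2 (T x) <= b * nrm2 x.
Proof.
case=> _ _ [b T_bnd]; exists `|Re b| => [|x Kx]; first exact: normr_ge0.
have := T_bnd x Kx; rewrite !(ipxxE hH) lecE => /andP[_].
have -> : Re (b * (nrm2 x)%:C) = Re b * nrm2 x by case: b {T_bnd} => ? ? /=; ring.
move/le_trans; apply; apply: ler_wpM2r; [exact: nrm2_ge0 | exact: ler_norm].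
Qed.

Lemma bounded_on_of_nrm2 K T (b : R) : linear_on K T -> (forall x, K x -> K (T x)) ->
  (forall x, K x -> nrm2 (T x) <= b * nrm2 x) -> bounded_on ip K T.
Proof.
move=> T_lin T_K T_bnd; split => //; exists b%:C => x Kx.
by rewrite !(ipxxE hH) -rmorphM lecR; apply: T_bnd.
Qed.

Lemma bounded_adjoint T (b : R) : linear_on TT T -> 0 <= b ->
  (forall x, nrm2 (T x) <= b * nrm2 x) ->
  exists T', [/\ forall x y, ip (T x) y = ip x (T' y),
     linear_on TT T' & forall y, nrm2 (T' y) <= b * nrm2 y].
Proof.
move=> T_lin b0 T_bnd.
have T'_ex y : exists z, forall x, ip (T x) y = ip x z.
  apply: (riesz_representation hH (c := b * nrm2 y)).
    by move=> a x x'; rewrite T_lin // (ipZDl hH).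
  move=> x; apply: le_trans (cauchy_schwarz hH _ _) _.
  have := T_bnd x; have := nrm2_ge0 hH y; have := nrm2_ge0 hH x.
  move: (nrm2 (T x)) (nrm2 x) (nrm2 y) => A B C B0 C0 le_A.
  have : A * C <= b * B * C by apply: ler_wpM2r.
  lra.
pose T' y := sval (cid (T'_ex y)).
have T'_adj x y : ip (T x) y = ip x (T' y) by rewrite /T'; case: cid.
exists T'; split => // [a y y' _ _|y].
  apply: (ip_injr hH) => x.
  by rewrite -T'_adj (ipDr hH) (ipZr hH) !T'_adj -(ipZr hH) -(ipDr hH).
have := cauchy_schwarz hH (T (T' y)) y; rewrite T'_adj (ipxxE hH) sqrmodR.
have := T_bnd (T' y).
have := nrm2_ge0 hH (T' y); have := nrm2_ge0 hH y; have := nrm2_ge0 hH (T (T' y)).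
move: (nrm2 (T' y)) (nrm2 y) (nrm2 (T (T' y))) => s N A A0 N0 s0 le_A le_s.
have : A * N <= b * s * N by apply: ler_wpM2r.
have bN : 0 <= b * N by apply: mulr_ge0.
nra.
Qed.

Lemma is_dag_sym K Dm X Y : (forall x, Dm x -> K (X x)) ->
  is_dag ip K Dm X Y -> is_dag ip K Dm Y X.
Proof.
move=> X_K [Y_K XY]; split => // xi eta xi_D eta_D.
by rewrite (ip_conj hH) -XY // -(ip_conj hH).
Qed.

End BoundedOperators.

Section Projection.
Variables (R : realType) (H : lmodType R[i]) (ip : H -> H -> R[i]).
Hypothesis hH : is_hilbert ip.
Notation nrm2 := (nrm2 ip).
Notation TT := (fun _ : H => True).
Variables (P : H -> H) (hP : projection ip P).

Lemma proj_lin : linear_on TT P. Proof. by case: hP => [[]]. Qed.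
Lemma projK x : P (P x) = P x. Proof. by case: hP. Qed.
Lemma proj_sym x y : ip (P x) y = ip x (P y). Proof. by case: hP. Qed.
Lemma projZD a x y : P (a *: x + y) = a *: P x + P y. Proof. exact: proj_lin. Qed.
Lemma proj0 : P 0 = 0. Proof. exact: lin_on0 proj_lin. Qed.
Lemma projB x y : P (x - y) = P x - P y. Proof. by rewrite (lin_onB proj_lin). Qed.

Lemma img_projP x : img P TT x <-> P x = x.
Proof. by split=> [[y [_ ->]]|Px]; [rewrite projK | exists x]. Qed.

Lemma ip_projl x y : P y = y -> ip x y = ip (P x) y.
Proof. by move=> Py; rewrite proj_sym Py. Qed.
Lemma ip_projr x y : P x = x -> ip x y = ip x (P y).
Proof. by move=> Px; rewrite -proj_sym Px. Qed.
Lemma ip_proj_compl x y : P x = x -> P y = 0 -> ip x y = 0.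
Proof. by move=> Px Py; rewrite -Px proj_sym Py (ip0r hH). Qed.

Lemma nrm2_proj_le x : nrm2 (P x) <= nrm2 x.
Proof.
have Px_orth : ip (P x) (x - P x) = 0 by rewrite (ipBr hH) -proj_sym projK subrr.
have := nrm2D hH (P x) (x - P x); rewrite addrC subrK Px_orth /= => ->.
by have := nrm2_ge0 hH (x - P x); lra.
Qed.

End Projection.

Section Density.
Variables (R : realType) (H : lmodType R[i]) (ip : H -> H -> R[i]).
Hypothesis hH : is_hilbert ip.
Variables (D : H -> Prop) (D_dense : dense_in ip (fun _ => True) D).

Lemma dense_orth0 w : (forall d, D d -> ip w d = 0) -> w = 0.
Proof.
move=> w_orth; have [u [uD /(hconvP hH) cvg_u]] := @D_dense w I.
by apply: (ipxx_eq0 hH); apply: (ip_lim0r hH cvg_u) => n; apply: w_orth.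
Qed.

Lemma dense_ip_inj w1 w2 : (forall d, D d -> ip w1 d = ip w2 d) -> w1 = w2.
Proof.
move=> w12; apply: subr0_eq; apply: dense_orth0 => d Dd.
by rewrite (ipBl hH) w12 // subrr.
Qed.

End Density.

Section Reduction.
Variables (R : realType) (H : lmodType R[i]) (ip : H -> H -> R[i])
  (D : H -> Prop) (M : (H -> H) -> Prop) (E' Z : H -> H).
Hypothesis hH : is_hilbert ip.
Hypothesis hD : subspace D.
Hypothesis D_dense : dense_in ip (fun _ => True) D.
Hypothesis hM : Ovs ip D M.
Hypothesis Mw_D : forall T xi, wcomm ip (fun _ => True) D M T -> D xi -> D (T xi).
Hypothesis hE : projection ip E'.
Hypothesis E_Mw : wcomm ip (fun _ => True) D M E'.

Notation cvgH := (cvgH ip).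
Notation TT := (fun _ : H => True).
(* [Mw] is [M'_w]; [MwE] is the weak commutant of [M_{E'}], taken in [E'H] w.r.t. [E'D]. *)
Notation Mw := (wcomm ip TT D M).
Notation EH := (img E' TT).
Notation ED := (img E' D).
Notation MwE := (wcomm ip EH ED M).

Lemma memD0 : D 0. Proof. by case: hD. Qed.
Lemma memDZD a x y : D x -> D y -> D (a *: x + y). Proof. by case: hD => _; apply. Qed.

Lemma EHP x : EH x <-> E' x = x. Proof. exact: (img_projP hE). Qed.
Lemma mem_EH x : EH (E' x). Proof. by exists x. Qed.
Lemma mem_ED d : D d -> ED (E' d). Proof. by exists d. Qed.
Lemma ED_D x : ED x -> D x. Proof. by case=> y [Dy ->]; apply: Mw_D. Qed.
Lemma ED_fixed x : ED x -> E' x = x. Proof. by case=> y [_ ->]; rewrite (projK hE). Qed.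

Lemma ED_ZD a x y : ED x -> ED y -> ED (a *: x + y).
Proof.
case=> p [Dp ->] [q [Dq ->]]; exists (a *: p + q).
by rewrite (projZD hE); split => //; apply: memDZD.
Qed.

Lemma ED_ip_inj w1 w2 : E' w1 = w1 -> E' w2 = w2 ->
  (forall c, ED c -> ip c w1 = ip c w2) -> w1 = w2.
Proof.
move=> Ew1 Ew2 w12; apply: (dense_ip_inj hH D_dense) => d Dd.
rewrite [LHS](ip_conj hH) [RHS](ip_conj hH); congr _^*.
by rewrite (ip_projl hE _ Ew1) (ip_projl hE _ Ew2) w12 //; apply: mem_ED.
Qed.

Lemma M_dag X : M X -> exists Y, M Y /\ is_dag ip TT D X Y.
Proof. by case: hM => _ _ _; apply. Qed.

Lemma dag_unique Q Y1 Y2 : is_dag ip TT D Q Y1 -> is_dag ip TT D Q Y2 ->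
  forall eta, D eta -> Y1 eta = Y2 eta.
Proof.
move=> [_ QY1] [_ QY2] eta Deta; apply: (dense_ip_inj hH D_dense) => d Dd.
by rewrite [LHS](ip_conj hH) [RHS](ip_conj hH) -QY1 // -QY2.
Qed.

Lemma Mw_commute T Q : Mw T -> M Q -> forall xi, D xi -> T (Q xi) = Q (T xi).
Proof.
move=> Mw_T MQ xi Dxi; have [Y [_ QY]] := M_dag MQ.
apply: (dense_ip_inj hH D_dense) => eta Deta.
have [_ T_comm] := Mw_T.
by rewrite (T_comm _ _ MQ QY) //; case: QY => _ ->; rewrite //; apply: Mw_D.
Qed.

Lemma bicomm_commute T X : Mw T -> bicomm ip TT D M X ->
  forall xi, D xi -> T (X xi) = X (T xi).
Proof.
move=> Mw_T [[_ _ [Y XY]] X_comm] xi Dxi.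
apply: (dense_ip_inj hH D_dense) => eta Deta.
by rewrite (X_comm _ Mw_T _ XY) //; case: XY => _ ->; rewrite //; apply: Mw_D.
Qed.

Lemma M_ED_fixed Q x : M Q -> ED x -> E' (Q x) = Q x.
Proof. by move=> MQ EDx; rewrite (Mw_commute E_Mw MQ (ED_D EDx)) (ED_fixed EDx). Qed.

Lemma reduced_dag Q Q' : M Q -> is_dag ip TT D Q Q' ->
  is_dag ip EH ED Q (fun b => E' (Q' b)).
Proof.
move=> MQ [_ QQ']; split=> [b _|a b EDa EDb]; first exact: mem_EH.
rewrite QQ'; try exact: ED_D.
by rewrite -(proj_sym hE) (ED_fixed EDa).
Qed.

Lemma reduced_dag_eq Q Q' Yd : M Q -> M Q' -> is_dag ip TT D Q Q' ->
  is_dag ip EH ED Q Yd -> forall b, ED b -> Yd b = Q' b.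
Proof.
move=> MQ MQ' [_ QQ'] [Yd_EH QYd] b EDb.
apply: ED_ip_inj; [exact/EHP/Yd_EH | exact: M_ED_fixed |].
move=> c EDc; rewrite -QYd // QQ' //; exact: ED_D.
Qed.

Lemma Mw_lin T : Mw T -> linear_on TT T.
Proof. by case=> [[]]. Qed.

Lemma MwE_extend T : MwE T -> Mw (fun x => T (E' x)).
Proof.
move=> MwE_T; have [[T_lin T_EH _] T_comm] := MwE_T.
have [b b0 T_bnd] := bounded_on_nrm2 hH MwE_T.1.
split.
  apply: (bounded_on_of_nrm2 hH (b := b)) => // [a x y _ _|x _].
    by rewrite (projZD hE) T_lin //; apply: mem_EH.
  apply: le_trans (T_bnd _ (mem_EH _)) _.
  by apply: ler_wpM2l => //; apply: nrm2_proj_le.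
move=> Q Qd MQ QQd xi eta Dxi Deta.
have [Q' [MQ' QQ']] := M_dag MQ.
have TE_EH : E' (T (E' xi)) = T (E' xi) by apply/EHP/T_EH/mem_EH.
have TQ_EH : E' (T (Q (E' xi))) = T (Q (E' xi)).
  by apply/EHP/T_EH/EHP/(M_ED_fixed MQ)/mem_ED.
rewrite (Mw_commute E_Mw MQ Dxi) (ip_projr hE _ TQ_EH).
rewrite (T_comm _ _ MQ (reduced_dag MQ QQ')); try exact: mem_ED.
rewrite [RHS](ip_projr hE _ TE_EH) -(Mw_commute E_Mw MQ') // (projK hE).
by rewrite (dag_unique QQ' QQd).
Qed.

Lemma bicomm_reduce X : bicomm ip TT D M X -> bicomm ip EH ED M X.
Proof.
move=> bX; have [[X_lin _ [Xd XXd]] X_comm] := bX.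
have X_ED x : ED x -> E' (X x) = X x.
  by case=> y [Dy ->]; rewrite (bicomm_commute E_Mw bX) ?(projK hE) //; apply: Mw_D.
split.
  split=> [a x y EDx EDy|x EDx|]; first by apply: X_lin; apply: ED_D.
    exact/EHP/X_ED.
  exists (fun b => E' (Xd b)); split=> [b _|a b EDa EDb]; first exact: mem_EH.
  case: XXd => _ ->; try exact: ED_D.
  by rewrite -(proj_sym hE) (ED_fixed EDa).
move=> T MwE_T Yd XYd a b EDa EDb.
have [[_ T_EH _] _] := MwE_T.
have Ta : E' (T a) = T a by apply/EHP/T_EH/EHP/ED_fixed.
rewrite -(X_ED _ EDa) (X_comm _ (MwE_extend MwE_T) _ XXd); try exact: ED_D.
rewrite (ED_fixed EDa) (ip_projr hE _ Ta) [RHS](ip_projr hE _ Ta).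
have Yd_b : E' (Yd b) = Yd b by apply/EHP; apply: XYd.1.
congr (ip _ _); rewrite Yd_b; apply: ED_ip_inj => [|//|c EDc]; first by rewrite (projK hE).
rewrite -XYd.2 //; case: XXd => _ ->; try exact: ED_D.
by rewrite -(proj_sym hE) (ED_fixed EDc).
Qed.

Lemma Mw_comp S T : Mw S -> Mw T -> Mw (fun x => S (T x)).
Proof.
move=> Mw_S Mw_T.
have [b1 b1_0 S_bnd] := bounded_on_nrm2 hH Mw_S.1.
have [b2 b2_0 T_bnd] := bounded_on_nrm2 hH Mw_T.1.
split.
  apply: (bounded_on_of_nrm2 hH (b := b1 * b2)) => // [a x y _ _|x _] /=.
    by rewrite !lin_onZD //; apply: Mw_lin.
  apply: le_trans (S_bnd _ I) _; rewrite -mulrA.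
  by apply: ler_wpM2l => //; apply: T_bnd.
move=> Q Qd MQ QQd xi eta Dxi Deta /=.
have [_ S_comm] := Mw_S.
by rewrite (Mw_commute Mw_T MQ) // (S_comm _ _ MQ QQd) //; apply: Mw_D.
Qed.

Lemma Mw_adj S : Mw S -> exists2 S', Mw S' & forall x y, ip (S x) y = ip x (S' y).
Proof.
move=> Mw_S; have [b b0 S_bnd] := bounded_on_nrm2 hH Mw_S.1.
have [S' [SS' S'_lin S'_bnd]] := bounded_adjoint hH (Mw_lin Mw_S) b0 (fun x => S_bnd x I).
exists S' => //; split=> [|Q Qd MQ QQd xi eta Dxi Deta].
  by apply: (bounded_on_of_nrm2 hH (b := b)) => // x _; apply: S'_bnd.
have [Q' [MQ' QQ']] := M_dag MQ.
have [_ S_comm] := Mw_S.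
rewrite (ip_conj hH) -SS' -(dag_unique QQ' QQd) //.
rewrite -(S_comm _ _ MQ' (is_dag_sym hH (fun x _ => I) QQ')) //.
by rewrite [RHS](ip_conj hH) -SS' -(ip_conj hH).
Qed.

Lemma Mw_reduce P : Mw P -> MwE (fun x => E' (P (E' x))).
Proof.
move=> Mw_P; have [c c0 P_bnd] := bounded_on_nrm2 hH Mw_P.1.
split.
  apply: (bounded_on_of_nrm2 hH (b := c)) => [a x y _ _|x _|x _].
  - by rewrite (projZD hE) (lin_onZD (Mw_lin Mw_P)) (projZD hE).
  - exact: mem_EH.
  apply: le_trans (nrm2_proj_le hH hE _) _; apply: le_trans (P_bnd _ I) _.
  by apply: ler_wpM2l => //; apply: nrm2_proj_le.
move=> Q Yd MQ QYd a b EDa EDb.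
have [Q' [MQ' QQ']] := M_dag MQ.
have [_ P_comm] := Mw_P.
rewrite (M_ED_fixed MQ EDa) (proj_sym hE) (ED_fixed EDb) (ED_fixed EDa).
rewrite (P_comm _ _ MQ QQ'); try exact: ED_D.
have /EHP Yd_b := QYd.1 b EDb.
by rewrite (proj_sym hE) Yd_b (reduced_dag_eq MQ MQ' QQ' QYd EDb).
Qed.

Lemma MwE_adj T : MwE T ->
  exists2 T', MwE T' & forall p q, EH p -> EH q -> ip (T p) q = ip p (T' q).
Proof.
move=> MwE_T; have [S' Mw_S' SS'] := Mw_adj (MwE_extend MwE_T).
exists (fun x => E' (S' (E' x))) => [|p q /EHP Ep /EHP Eq]; first exact: Mw_reduce.
by rewrite -{1}Ep SS' (ip_projr hE _ Ep) Eq.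
Qed.

Lemma bicomm_dag Y Yd : bicomm ip EH ED M Y -> is_dag ip EH ED Y Yd -> bicomm ip EH ED M Yd.
Proof.
move=> bY YYd; have [[_ Y_EH _] Y_comm] := bY; have [Yd_EH YYd_ip] := YYd.
have Yd_fixed x : ED x -> E' (Yd x) = Yd x by move=> EDx; apply/EHP/Yd_EH.
split.
  split=> [a x y EDx EDy|//|]; last by exists Y; apply: is_dag_sym.
  apply: ED_ip_inj; [exact/Yd_fixed/ED_ZD | by rewrite (projZD hE) !Yd_fixed |].
  move=> c EDc; rewrite -YYd_ip //; last exact: ED_ZD.
  by rewrite !(ipDr hH) !(ipZr hH) !YYd_ip.
move=> T MwE_T Y' YdY' a b EDa EDb.
have -> : Y' b = Y b.
  apply: ED_ip_inj; [exact/EHP/YdY'.1 | exact/EHP/Y_EH |].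
  by move=> c EDc; rewrite -YdY'.2 // (ip_conj hH) -YYd_ip // -(ip_conj hH).
have [T' MwE_T' TT'] := MwE_adj MwE_T.
have EH_ED x : ED x -> EH x by move=> /ED_fixed /EHP.
rewrite TT'; try by [apply: EH_ED | apply: Yd_EH].
rewrite (ip_conj hH) -(Y_comm _ MwE_T' _ YYd) // -(ip_conj hH).
by rewrite -TT'; try by [apply: EH_ED | apply: Y_EH].
Qed.

Hypothesis hZ : projection ip Z.
Hypothesis Z_range : forall x, (exists y, x = Z y) <->
  exists u : nat -> H,
    (forall k, exists (n : nat) (Cs : 'I_n -> H -> H) (xs : 'I_n -> H),
       (forall j, Mw (Cs j)) /\ u k = \sum_(j < n) Cs j (E' (xs j)))
    /\ hconv ip u x.

Definition span_MwE s := exists (n : nat) (Cs : 'I_n -> H -> H) (xs : 'I_n -> H),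
  (forall j, Mw (Cs j)) /\ s = \sum_(j < n) Cs j (E' (xs j)).

Lemma Z_rangeP x : (exists y, x = Z y) <-> Z x = x.
Proof. by split=> [[y ->]|Zx]; [rewrite (projK hZ) | exists x]. Qed.

Lemma Z_span s : span_MwE s -> Z s = s.
Proof.
move=> span_s; apply/Z_rangeP/Z_range; exists (fun _ => s); split=> //.
exact/(hconvP hH)/cvgH_cst.
Qed.

Lemma span_MwE_comm S s : Mw S -> span_MwE s -> span_MwE (S s).
Proof.
move=> Mw_S [n [Cs [xs [Mw_Cs ->]]]]; exists n, (fun j x => S (Cs j x)), xs.
by split=> [j|]; [apply: Mw_comp | apply: lin_on_sum; apply: Mw_lin].
Qed.

Lemma Z_range_comm S y : Mw S -> Z (S (Z y)) = S (Z y).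
Proof.
move=> Mw_S; have [u [u_span cvg_u]] := (Z_range (Z y)).1 (ex_intro _ y erefl).
apply/Z_rangeP/Z_range; exists (fun k => S (u k)); split.
  by move=> k; apply: span_MwE_comm => //; apply: u_span.
have [b _ S_bnd] := bounded_on_nrm2 hH Mw_S.1.
apply/(hconvP hH); apply: (cvgH_bounded hH (b := b)); first exact: Mw_lin.
  by move=> z; apply: S_bnd.
exact/(hconvP hH).
Qed.

(* The range of [Z] is invariant under [Mw] and so is its orthogonal complement, by [Mw_adj]. *)
Lemma Z_commute S x : Mw S -> Z (S x) = S (Z x).
Proof.
move=> Mw_S; have [S' Mw_S' SS'] := Mw_adj Mw_S.
apply: (ip_injl hH) => y.
rewrite (proj_sym hZ) SS' -(Z_range_comm _ Mw_S') -(proj_sym hZ) -SS'.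
by rewrite -(Z_range_comm _ Mw_S) -(proj_sym hZ) (projK hZ).
Qed.

Definition graph_e (X : H -> H) (x y : H) : Prop :=
  exists (n : nat) (Cs : 'I_n -> H -> H) (xs : 'I_n -> H) (eta : H),
    [/\ (forall j, Mw (Cs j)), (forall j, D (xs j)), D eta,
        x = \sum_(j < n) Cs j (E' (xs j)) + (eta - Z eta)
      & y = \sum_(j < n) Cs j (X (E' (xs j)))].

Lemma graph_e_elem X C x : Mw C -> D x -> graph_e X (C (E' x)) (C (X (E' x))).
Proof.
move=> Mw_C Dx; exists 1%N, (fun _ => C), (fun _ => x), 0.
by split=> //; rewrite ?big_ord1 ?(proj0 hZ) ?subrr ?addr0 //; apply: memD0.
Qed.

Lemma graph_e_compl X eta : D eta -> graph_e X (eta - Z eta) 0.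
Proof.
move=> Deta; exists 0%N, (fun _ => id), (fun _ => 0), eta.
by split=> //; rewrite ?big_ord0 ?add0r //; case.
Qed.

Lemma graph_e_comm S X w y : Mw S -> graph_e X w y -> graph_e X (S w) (S y).
Proof.
move=> Mw_S [n [Cs [xs [eta [Mw_Cs Dxs Deta -> ->]]]]].
have S_lin := Mw_lin Mw_S.
exists n, (fun j x => S (Cs j x)), xs, (S eta); split=> //.
- by move=> j; apply: Mw_comp.
- exact: Mw_D.
- by rewrite (lin_onD S_lin) (lin_on_sum S_lin) (lin_onB S_lin) (Z_commute _ Mw_S).
- exact: lin_on_sum.
Qed.

(* [C'^* C] reduces to an element of [(M_E')'_w], which commutes with [Y1]. *)
Lemma bicomm_ip_sandwich Y1 Y2 C C' a b : bicomm ip EH ED M Y1 -> is_dag ip EH ED Y1 Y2 ->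
  Mw C -> Mw C' -> ED a -> ED b -> ip (C (Y1 a)) (C' b) = ip (C a) (C' (Y2 b)).
Proof.
move=> bY1 Y12 Mw_C Mw_C' EDa EDb.
have [C'' Mw_C'' C'C''] := Mw_adj Mw_C'.
have C'_adj z w : ip z (C' w) = ip (C'' z) w by rewrite (ip_conj hH) C'C'' -(ip_conj hH).
have [[_ Y1_EH _] Y1_comm] := bY1.
have /EHP Y1a : EH (Y1 a) by apply: Y1_EH.
have /EHP Y2b : EH (Y2 b) by apply: Y12.1.
rewrite !C'_adj.
have -> : ip (C'' (C (Y1 a))) b = ip (E' (C'' (C (E' (Y1 a))))) b.
  by rewrite (proj_sym hE) Y1a (ED_fixed EDb).
have -> : ip (C'' (C a)) (Y2 b) = ip (E' (C'' (C (E' a)))) (Y2 b).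
  by rewrite (proj_sym hE) (ED_fixed EDa) Y2b.
exact: Y1_comm (Mw_reduce (Mw_comp Mw_C'' Mw_C)) _ Y12 _ _ EDa EDb.
Qed.

(* The [(I - Z) D] components are orthogonal to the range of [Z], where the images lie. *)
Lemma graph_e_adjoint Y1 Y2 u y w y' : bicomm ip EH ED M Y1 -> is_dag ip EH ED Y1 Y2 ->
  graph_e Y1 u y -> graph_e Y2 w y' -> ip y w = ip u y'.
Proof.
move=> bY1 Y12 [n [Cs [xs [eta [Mw_Cs Dxs Deta -> ->]]]]].
move=> [m [Cs' [xs' [eta' [Mw_Cs' Dxs' Deta' -> ->]]]]].
have Z_compl z : Z (z - Z z) = 0 by rewrite (projB hZ) (projK hZ) subrr.
have Z_img (X : H -> H) k (xs0 : 'I_k -> H) Cs0 : (forall j, Mw (Cs0 j)) ->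
    (forall j, EH (X (E' (xs0 j)))) ->
    Z (\sum_(j < k) Cs0 j (X (E' (xs0 j)))) = \sum_(j < k) Cs0 j (X (E' (xs0 j))).
  move=> Mw_Cs0 X_EH; apply: Z_span; exists k, Cs0, (fun j => X (E' (xs0 j))).
  by split=> //; apply: eq_bigr => j _; have /EHP -> := X_EH j.
have [[_ Y1_EH _] _] := bY1.
have Z_y := Z_img _ _ _ _ Mw_Cs (fun j => Y1_EH _ (mem_ED (Dxs j))).
have Z_y' := Z_img _ _ _ _ Mw_Cs' (fun j => Y12.1 _ (mem_ED (Dxs' j))).
rewrite (ipDr hH) (ipDl hH) (ip_proj_compl hH hZ Z_y (Z_compl _)).
rewrite [ip (eta - _) _](ip_conj hH) (ip_proj_compl hH hZ Z_y' (Z_compl _)).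
rewrite conjC0 !addr0 (ip_suml hH) (ip_sumr hH).
under eq_bigr => j _ do rewrite (ip_sumr hH).
under [RHS]eq_bigr => k _ do rewrite (ip_suml hH).
rewrite exchange_big /=; apply: eq_bigr => k _; apply: eq_bigr => j _.
exact: bicomm_ip_sandwich bY1 Y12 (Mw_Cs j) (Mw_Cs' k) (mem_ED (Dxs j)) (mem_ED (Dxs' k)).
Qed.

Lemma graph_e_dom_orth0 a : (forall C x, Mw C -> D x -> ip a (C (E' x)) = 0) ->
  (forall eta, D eta -> ip a (eta - Z eta) = 0) -> a = 0.
Proof.
move=> a_orth_MwE a_orth_compl.
have a_orth C x : Mw C -> ip a (C (E' x)) = 0.
  move=> Mw_C; have [u [Du /(hconvP hH) cvg_u]] := @D_dense x I.
  have Mw_CE := Mw_comp Mw_C E_Mw.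
  have [b _ CE_bnd] := bounded_on_nrm2 hH Mw_CE.1.
  have := cvgH_bounded hH (Mw_lin Mw_CE) (fun z => CE_bnd z I) cvg_u.
  by move/(ip_lim0r hH); apply => n; apply: a_orth_MwE.
have aZa : ip a (Z a) = 0.
  have [u [u_span /(hconvP hH) cvg_u]] := (Z_range (Z a)).1 (ex_intro _ a erefl).
  apply: (ip_lim0r hH cvg_u) => k; have [n [Cs [xs [Mw_Cs ->]]]] := u_span k.
  by rewrite (ip_sumr hH) big1 // => j _; apply: a_orth.
have Za : a - Z a = 0.
  apply: (dense_orth0 hH D_dense) => d Dd.
  by rewrite (ipBl hH) (proj_sym hZ) -(ipBr hH); apply: a_orth_compl.
apply: (ipxx_eq0 hH).
have -> : ip a a = ip a (Z a + (a - Z a)) by rewrite addrC subrK.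
by rewrite Za addr0 aZa.
Qed.

(* [z] is the value at [xi] of the adjoint of [(Y2)_e]; for [Y2 = Y1^dagger] this is
   the closure of [(Y1)_e]. *)
Definition adj_val (Y2 : H -> H) xi z := forall w y', graph_e Y2 w y' -> ip z w = ip xi y'.

Lemma adj_val_unique Y2 xi z1 z2 : adj_val Y2 xi z1 -> adj_val Y2 xi z2 -> z1 = z2.
Proof.
move=> z1P z2P; apply: subr0_eq; apply: graph_e_dom_orth0 => [C x Mw_C Dx|eta Deta].
  have G := graph_e_elem Y2 Mw_C Dx.
  by rewrite (ipBl hH) (z1P _ _ G) (z2P _ _ G) subrr.
have G := graph_e_compl Y2 Deta.
by rewrite (ipBl hH) (z1P _ _ G) (z2P _ _ G) subrr.
Qed.

Lemma adj_val_lim Y1 Y2 u v xi z : bicomm ip EH ED M Y1 -> is_dag ip EH ED Y1 Y2 ->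
  (forall n, graph_e Y1 (u n) (v n)) -> cvgH u xi -> cvgH v z -> adj_val Y2 xi z.
Proof.
move=> bY1 Y12 G_uv cvg_u cvg_v w y' G_wy'.
by apply: (ip_lim hH cvg_u cvg_v) => n; apply: graph_e_adjoint bY1 Y12 (G_uv n) G_wy'.
Qed.

Hypothesis D_closure_e : forall xi, D xi <->
  (forall X, bicomm ip EH ED M X -> closdom_rel ip (graph_e X) xi).

Lemma closure_graph_e X xi : bicomm ip EH ED M X -> D xi ->
  exists u v z, [/\ forall n, graph_e X (u n) (v n), cvgH u xi & cvgH v z].
Proof.
move=> bX Dxi; have [u [v [G_uv [cvg_u [z cvg_v]]]]] := (D_closure_e xi).1 Dxi X bX.
by exists u, v, z; split=> //; apply/(hconvP hH).
Qed.

Lemma adj_val_exists Y1 Y2 xi : bicomm ip EH ED M Y1 -> is_dag ip EH ED Y1 Y2 ->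
  exists z, D xi -> adj_val Y2 xi z.
Proof.
move=> bY1 Y12; case: (pselect (D xi)) => [Dxi|]; last by exists 0.
have [u [v [z [G_uv cvg_u cvg_v]]]] := closure_graph_e bY1 Dxi.
by exists z => _; apply: adj_val_lim bY1 Y12 G_uv cvg_u cvg_v.
Qed.

Section Extension.
Variables (Y Yd : H -> H).
Hypotheses (bY : bicomm ip EH ED M Y) (YYd : is_dag ip EH ED Y Yd).

Let bYd : bicomm ip EH ED M Yd := bicomm_dag bY YYd.
Let YdY : is_dag ip EH ED Yd Y.
Proof. by case: bY => [[_ Y_EH _] _]; apply: is_dag_sym. Qed.

Definition ext_e xi := sval (cid (adj_val_exists xi bY YYd)).
Definition ext_e_dag xi := sval (cid (adj_val_exists xi bYd YdY)).

Lemma ext_eP xi : D xi -> adj_val Yd xi (ext_e xi).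
Proof. by rewrite /ext_e; case: cid. Qed.

Lemma ext_e_dagP xi : D xi -> adj_val Y xi (ext_e_dag xi).
Proof. by rewrite /ext_e_dag; case: cid. Qed.

Lemma ext_e_lin : linear_on D ext_e.
Proof.
move=> a x y Dx Dy; apply: (adj_val_unique (ext_eP (memDZD a Dx Dy))) => w y' G.
by rewrite (ipZDl hH) (ext_eP Dx G) (ext_eP Dy G) (ipZDl hH).
Qed.

Lemma ext_e_agree : agree_on ED ext_e Y.
Proof.
move=> c EDc; apply: (adj_val_unique (ext_eP (ED_D EDc))) => w y' G.
apply: graph_e_adjoint bY YYd _ G.
case: EDc => [d [Dd ->]]; have := graph_e_elem Y E_Mw Dd.
have [[_ Y_EH _] _] := bY.
by rewrite (projK hE) (proj1 (EHP _) (Y_EH _ (mem_ED Dd))).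
Qed.

Lemma ext_e_dag_is_dag : is_dag ip TT D ext_e ext_e_dag.
Proof.
split=> // xi eta Dxi Deta.
have [u [v [z [G_uv cvg_u cvg_v]]]] := closure_graph_e bYd Deta.
have zP := adj_val_lim bYd YdY G_uv cvg_u cvg_v.
rewrite -(adj_val_unique zP (ext_e_dagP Deta)) (ip_conj hH) [RHS](ip_conj hH).
congr _^*; apply: (ip_lim hH cvg_v cvg_u) => n.
by rewrite (ip_conj hH) (ext_eP Dxi (G_uv n)) -(ip_conj hH).
Qed.

Lemma ext_e_commute T xi : Mw T -> D xi -> T (ext_e xi) = ext_e (T xi).
Proof.
move=> Mw_T Dxi; have [T' Mw_T' TT'] := Mw_adj Mw_T.
apply: (adj_val_unique _ (ext_eP (Mw_D Mw_T Dxi))) => w y' G.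
by rewrite TT' (ext_eP Dxi (graph_e_comm Mw_T' G)) -TT'.
Qed.

Lemma bicomm_ext_e : bicomm ip TT D M ext_e.
Proof.
split; first by split=> //; [exact: ext_e_lin | exists ext_e_dag; exact: ext_e_dag_is_dag].
move=> T Mw_T Xd XXd xi eta Dxi Deta.
by rewrite ext_e_commute //; apply: XXd.2 => //; apply: Mw_D.
Qed.

End Extension.

Lemma bicomm_extend Y : bicomm ip EH ED M Y ->
  exists X, bicomm ip TT D M X /\ agree_on ED X Y.
Proof.
move=> bY; have [[_ _ [Yd YYd]] _] := bY.
by exists (ext_e bY YYd); split; [apply: bicomm_ext_e | apply: ext_e_agree].
Qed.

End Reduction.

Theorem lemma3p1 (R : realType) (H : lmodType R[i]) (ip : H -> H -> R[i])
  (D : H -> Prop) (M : (H -> H) -> Prop) (E' Z : H -> H) :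
  is_hilbert ip ->
  subspace D -> dense_in ip (fun _ => True) D ->
  Ovs ip D M -> fully_closed ip D M ->
  (forall T xi, wcomm ip (fun _ => True) D M T -> D xi -> D (T xi)) ->
  projection ip E' -> wcomm ip (fun _ => True) D M E' ->
  projection ip Z ->
  (forall x, (exists y, x = Z y) <->
     exists u : nat -> H,
       (forall k, exists (n : nat) (Cs : 'I_n -> H -> H) (xs : 'I_n -> H),
          (forall j, wcomm ip (fun _ => True) D M (Cs j)) /\
          u k = \sum_(j < n) Cs j (E' (xs j)))
       /\ hconv ip u x) ->
  (forall xi, D xi <->
     (forall X, bicomm ip (img E' (fun _ => True)) (img E' D) M X ->
        closdom_rel ip
          (fun x y => exists (n : nat) (Cs : 'I_n -> H -> H) (xs : 'I_n -> H) (eta : H),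
             [/\ (forall j, wcomm ip (fun _ => True) D M (Cs j)),
                 (forall j, D (xs j)), D eta,
                 x = \sum_(j < n) Cs j (E' (xs j)) + (eta - Z eta)
               & y = \sum_(j < n) Cs j (X (E' (xs j)))])
          xi)) ->
  (forall X, bicomm ip (fun _ => True) D M X ->
     exists Y, bicomm ip (img E' (fun _ => True)) (img E' D) M Y
               /\ agree_on (img E' D) X Y) /\
  (forall Y, bicomm ip (img E' (fun _ => True)) (img E' D) M Y ->
     exists X, bicomm ip (fun _ => True) D M X /\ agree_on (img E' D) X Y).
Proof.
move=> hH hD D_dense hM _ Mw_D hE E_Mw hZ Z_range D_closure_e; split=> [X bX|Y bY].
  by exists X; split=> //; apply: (bicomm_reduce hH D_dense hM Mw_D hE E_Mw).
exact: (bicomm_extend hH hD D_dense hM Mw_D hE E_Mw hZ Z_range D_closure_e).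
Qed.
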